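(* Let $G$ be a finite simple graph with a normal spanning tree $T$ rooted at some vertex $r$, such that $G$ has no secant edges with respect to $T$. If $T$ is a star$^0$-like tree, then $\chi(G)\le 4$.
   Context: For a tree $T$ rooted at $r$, write $y\le_T x$ if $y$ lies on the $rx$-path of $T$. $T$ is normal in $G$ if for every edge $xy$ of $G$, $x\le_T y$ or $y\le_T x$. Two edges $e,e'$ of $G$ are secant with respect to $T$ if there is a path $P=x_1\dots x_n$ in $T$ with $x_1=r$ containing the ends of $e,e'$ such that, with respect to the enumeration $x_1\dots x_n$, both are jumps (an edge $x_ix_j$ with $|i-j|>1$) and, writing them $x_lx_m$, $x_px_q$ with $l<m$, $p<q$, we have $l<p<m<q$ or $p<l<q<m$. A star$^0$-like tree is a tree having exactly one vertex of degree strictly greater than $2$. *)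

From mathcomp Require Import all_boot.
Set Implicit Arguments. Unset Strict Implicit. Unset Printing Implicit Defensive.

Definition simple_graph (V : finType) (g : rel V) : Prop :=
  symmetric g /\ irreflexive g.

Definition gpath (V : finType) (t : rel V) (a b : V) (p : seq V) : Prop :=
  [/\ p <> [::], head a p = a, last a p = b, uniq p & sorted t p].

Definition has_cycle (V : finType) (t : rel V) : Prop :=
  exists c : seq V, [/\ 3 <= size c, uniq c & cycle t c].

Definition is_tree (V : finType) (t : rel V) : Prop :=
  [/\ simple_graph t, (forall a b : V, exists p, gpath t a b p) & ~ has_cycle t].

Definition spanning_tree (V : finType) (g t : rel V) : Prop :=
  is_tree t /\ (forall x y, t x y -> g x y).

Definition tree_le (V : finType) (t : rel V) (r y x : V) : Prop :=
  exists p, gpath t r x p /\ y \in p.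

Definition normal_tree (V : finType) (g t : rel V) (r : V) : Prop :=
  forall x y, g x y -> tree_le t r x y \/ tree_le t r y x.

(* Edges x_l x_m and x_p x_q of G (l<m, p<q) are secant w.r.t. T: they are
   both jumps of some path P = x_1 ... x_n of T with x_1 = r (0-indexed here),
   and they cross: l<p<m<q or p<l<q<m. *)
Definition secant_pair (V : finType) (g t : rel V) (r : V)
  (a b c d : V) : Prop :=
  exists (P : seq V) (l m p q : nat),
    [/\ gpath t r (last r P) P,
        [/\ l < m < size P, p < q < size P, l.+1 < m & p.+1 < q],
        [/\ [set a; b] = [set nth r P l; nth r P m],
            [set c; d] = [set nth r P p; nth r P q], g a b & g c d] &
        ((l < p) && (p < m) && (m < q)) || ((p < l) && (l < q) && (q < m))].

Definition no_secant_edges (V : finType) (g t : rel V) (r : V) : Prop :=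
  forall a b c d, ~ secant_pair g t r a b c d.

Definition tdeg (V : finType) (t : rel V) (x : V) : nat := #|[set y | t x y]|.

Definition star0_like (V : finType) (t : rel V) : Prop :=
  exists x, forall y, 2 < tdeg t y <-> y = x.

Definition colorable (V : finType) (g : rel V) (k : nat) : Prop :=
  exists f : V -> 'I_k, forall x y, g x y -> f x != f y.

From mathcomp Require Import all_boot perm zify.
Set Implicit Arguments. Unset Strict Implicit. Unset Printing Implicit Defensive.

(* Let c be the unique vertex of degree >= 3 of T and call the r-c path of T the trunk.
   In the tree order of T every edge of G joins comparable vertices (normality)
   and no two edges cross along a root path (no secant edges).  A graph with these
   two properties whose tree order branches at most at the root is 2-degenerate,
   like an outerplanar graph, hence 3-colourable.  This applies to the trunk plus a
   vertex d above c joined to the trunk vertices having a neighbour off the trunk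
   (all such neighbours lie above c), and to the vertices off the trunk plus the
   root joined to those having a neighbour on the trunk.  Permuting the colours of
   both 3-colourings so that these boundary vertices use {0,1} on the trunk and
   {2,3} off it yields a 4-colouring of G. *)

Lemma degenerate_colorable (U : finType) (E : rel U) (W : {set U}) (k : nat) :
  symmetric E -> irreflexive E ->
  (forall A : {set U}, A \subset W -> A != set0 ->
     exists2 v, v \in A & #|[set u in A | E v u]| <= k) ->
  exists f : U -> 'I_k.+1, {in W &, forall x y, E x y -> f x != f y}.
Proof.
move=> Esym Eirr degenerate.
suff colA (A : {set U}) : A \subset W ->
    exists f : U -> 'I_k.+1, {in A &, forall x y, E x y -> f x != f y}.
  exact: colA.
have [n] := ubnP #|A|; elim: n A => // n IH A cardA sAW.
have [->|A0] := eqVneq A set0; first by exists (fun=> ord0) => x; rewrite inE.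
have [v vA degv] := degenerate A sAW A0.
have [f fP] : exists f : U -> 'I_k.+1,
    {in A :\ v &, forall x y, E x y -> f x != f y}.
  apply: IH; last exact: subset_trans (subsetDl _ _) sAW.
  by rewrite (cardsD1 v A) vA in cardA.
set N := [set u in A | E v u].
have /card_gt0P[col] : 0 < #|~: (f @: N)|.
  by rewrite cardsCs setCK card_ord subn_gt0 ltnS (leq_trans (leq_imset_card _ _)).
rewrite inE => colN.
exists (fun u => if u == v then col else f u) => x y xA yA Exy.
case: (eqVneq x v) => [xv|xv]; case: (eqVneq y v) => [yv|yv].
- by rewrite xv yv Eirr in Exy.
- by apply: contra colN => /eqP ->; rewrite imset_f // inE yA -xv.
- by rewrite eq_sym; apply: contra colN => /eqP ->; rewrite imset_f // inE xA Esym -yv.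
- by apply: fP; rewrite ?inE ?xv ?yv.
Qed.

Lemma ex_maximal (U : finType) (le : rel U) (B : {set U}) :
  reflexive le -> (forall x y, le x y -> le y x -> x = y) -> transitive le -> B != set0 ->
  exists2 b, b \in B & forall y, y \in B -> le b y -> y = b.
Proof.
move=> le_refl le_anti le_trans /set0Pn[b0 b0B].
have [b bB bmax] := arg_maxnP (fun y => #|[set z in B | le z y]|) b0B.
exists b => // y yB lby; apply/eqP; apply: contraTT (bmax y yB) => nyb.
rewrite /= -ltnNge; apply: proper_card.
apply/properP; split.
  by apply/subsetP=> z; rewrite !inE => /andP[-> lzb]; apply: le_trans lby.
exists y; first by rewrite inE yB le_refl.
by rewrite inE yB /=; apply: contra nyb => lyb; apply/eqP; exact: le_anti.
Qed.

Section NonCrossing.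
Variables (U : finType) (le : rel U) (r0 : U) (E : rel U) (W : {set U}).
Let lt x y := le x y && (x != y).
Hypothesis le_refl : reflexive le.
Hypothesis le_anti : forall x y, le x y -> le y x -> x = y.
Hypothesis le_trans : transitive le.
Hypothesis le_total_below : forall x y z, le x z -> le y z -> le x y || le y x.
Hypothesis le_r0 : forall x, le r0 x.
Hypothesis r0W : r0 \in W.
Hypothesis le_total_above :
  {in W & &, forall x y z, x != r0 -> le x y -> le x z -> le y z || le z y}.
Hypotheses (Esym : symmetric E) (Eirr : irreflexive E).
Hypothesis E_comparable : {in W &, forall x y, E x y -> le x y || le y x}.
Hypothesis noncrossing : forall x y z w, x \in W -> y \in W -> z \in W -> w \in W ->
  lt x y -> lt y z -> lt z w -> E x z -> E y w -> False.

Lemma lt_le_trans x y z : lt x y -> le y z -> lt x z.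
Proof.
case/andP=> lxy nxy lyz; rewrite /lt (le_trans lxy lyz).
by apply: contra nxy => /eqP exz; rewrite -exz in lyz; apply/eqP; exact: le_anti.
Qed.

Lemma le_lt_trans x y z : le x y -> lt y z -> lt x z.
Proof.
move=> lxy /andP[lyz nyz]; rewrite /lt (le_trans lxy lyz).
by apply: contra nyz => /eqP exz; rewrite exz in lxy; apply/eqP; exact: le_anti.
Qed.

Lemma ltW x y : lt x y -> le x y.
Proof. by case/andP. Qed.

Section Chain.
Variables (C : {set U}) (m M : U).
Hypotheses (sCW : C \subset W) (MC : M \in C) (mM : m != M).
Hypothesis C_between : {in C, forall x, le m x && le x M}.

Let inW x : x \in C -> x \in W := subsetP sCW x.
Let nbr x := [set u in C | E x u].
Let span u w := #|[set x in C | lt u x && lt x w]|.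
Let nested (p : U * U) := [&& p.1 \in C, p.2 \in C, E p.1 p.2 & 0 < span p.1 p.2].

Lemma chain_comparable : {in C &, forall x y, le x y || le y x}.
Proof.
move=> x y xC yC; have /andP[_ xM] := C_between xC; have /andP[_ yM] := C_between yC.
exact: le_total_below xM yM.
Qed.

Lemma span_lt u w u' w' x : le u u' -> le w' w -> x \in C -> lt u x -> lt x w ->
  ~~ (lt u' x && lt x w') -> span u' w' < span u w.
Proof.
move=> uu' w'w xC ux xw nx; apply: proper_card; apply/properP; split.
  apply/subsetP=> y; rewrite !inE => /and3P[-> u'y yw'].
  by rewrite (le_lt_trans uu' u'y) (lt_le_trans yw' w'w).
by exists x; rewrite inE xC ?ux ?xw // (negbTE nx).
Qed.

Lemma nbr_card_le1 x (P : pred U) :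
  (forall y1 y2, y1 \in nbr x -> y2 \in nbr x -> P y1 -> P y2 -> le y1 y2 -> y1 != y2 ->
     False) ->
  #|[set y in nbr x | P y]| <= 1.
Proof.
move=> H; apply/card_le1_eqP => y1 y2; rewrite !(inE, in_set (fun y => (y \in C) && _)).
move=> /andP[/andP[y1C Ey1] P1] /andP[/andP[y2C Ey2] P2]; apply/eqP/negP => /negP n12.
have n1 : y1 \in nbr x by rewrite inE y1C.
have n2 : y2 \in nbr x by rewrite inE y2C.
case/orP: (chain_comparable y1C y2C) => [l12|l21]; last exact: H n2 n1 P2 P1 l21 n12.
by apply: H n1 n2 P1 P2 l12 _; rewrite eq_sym.
Qed.

(* A vertex x strictly inside an innermost nested edge uw has all its neighbours
   between u and w, and at most one on each side of x: two on one side would give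
   a nested edge with a smaller span. *)
Lemma nested_low_degree u w : nested (u, w) ->
  (forall p, nested p -> span u w <= span p.1 p.2) ->
  exists2 v, v \in C :\ m & #|nbr v| <= 2.
Proof.
case/and4P=> /= uC wC Euw /card_gt0P[x]; rewrite inE => /and3P[xC ux xw] minimal.
have not_nested u' w' : le u u' -> le w' w -> ~~ (lt u' x && lt x w') ->
    nested (u', w') -> False.
  move=> uu' w'w nx /minimal /=; apply/negP; rewrite -ltnNge.
  by rewrite (span_lt uu' w'w xC ux xw nx).
exists x.
  rewrite !inE xC andbT; apply: contraTneq ux => xm.
  have /andP[mu _] := C_between uC.
  by rewrite /lt xm; apply/negP => /andP[um /eqP]; apply; exact: le_anti.
have below : #|[set y in nbr x | lt y x]| <= 1.
  apply: nbr_card_le1 => y1 y2; rewrite !inE => /andP[y1C Ey1] /andP[y2C Ey2] y1x y2x l12 n12.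
  have uy1 : le u y1.
    case/orP: (chain_comparable uC y1C) => // y1u.
    have [->|ny1u] := eqVneq y1 u; first exact: le_refl.
    exfalso; apply: (noncrossing (inW y1C) (inW uC) (inW xC) (inW wC) _ ux xw) => //.
      by rewrite /lt y1u.
    by rewrite Esym.
  apply: (not_nested y1 x uy1 (ltW xw)); first by rewrite /lt eqxx !andbF.
  rewrite /nested /= y1C xC Esym Ey1 /=; apply/card_gt0P; exists y2.
  by rewrite inE y2C y2x /lt l12 n12.
have above : #|[set y in nbr x | lt x y]| <= 1.
  apply: nbr_card_le1 => y1 y2; rewrite !inE => /andP[y1C Ey1] /andP[y2C Ey2] xy1 xy2 l12 n12.
  have y2w : le y2 w.
    case/orP: (chain_comparable y2C wC) => // wy2.
    have [->|nwy2] := eqVneq w y2; first exact: le_refl.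
    exfalso; apply: (noncrossing (inW uC) (inW xC) (inW wC) (inW y2C) ux xw _ Euw Ey2).
    by rewrite /lt wy2.
  apply: (not_nested x y2 (ltW ux) y2w); first by rewrite /lt eqxx !andbF.
  rewrite /nested /= xC y2C Ey2 /=; apply/card_gt0P; exists y1.
  by rewrite inE y1C xy1 /lt l12 n12.
have -> : nbr x = [set y in nbr x | lt y x] :|: [set y in nbr x | lt x y].
  apply/setP=> y; rewrite !inE; have [yC|] //= := boolP (y \in C).
  have [Exy|] //= := boolP (E x y).
  have nyx : y != x by apply: contraTneq Exy => ->; rewrite Eirr.
  by rewrite /lt nyx eq_sym nyx !andbT (chain_comparable yC xC).
by rewrite (leq_trans (leq_card_setU _ _)) // -[2]/(1 + 1) leq_add.
Qed.

Lemma unnested_low_degree : (forall p, ~~ nested p) -> #|nbr M| <= 1.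
Proof.
move=> unnested; apply: leq_trans (@nbr_card_le1 M predT _).
  by apply: subset_leq_card; apply/subsetP => y; rewrite !inE andbT.
move=> y1 y2; rewrite !inE => /andP[y1C EMy1] /andP[y2C EMy2] _ _ l12 n12.
move/negP: (unnested (y1, M)); apply; rewrite /nested /= y1C MC Esym EMy1 /=.
apply/card_gt0P; exists y2; have /andP[_ y2M] := C_between y2C.
rewrite inE y2C /lt l12 n12 y2M /=.
by apply: contraTneq EMy2 => ->; rewrite Eirr.
Qed.

Lemma chain_low_degree : exists2 v, v \in C :\ m & #|nbr v| <= 2.
Proof.
case: (pickP nested) => [p0 np0|unnested].
  have [[u w] nuw minuw] := arg_minnP (fun p => span p.1 p.2) np0.
  exact: nested_low_degree nuw minuw.
exists M; first by rewrite !inE MC eq_sym mM.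
by apply: leq_trans (unnested_low_degree _) _ => // p; rewrite unnested.
Qed.
End Chain.

Lemma noncrossing_degenerate (A : {set U}) : A \subset W -> A != set0 ->
  exists2 v, v \in A & #|[set u in A | E v u]| <= 2.
Proof.
move=> sAW A0; have inW x : x \in A -> x \in W := subsetP sAW x.
have [Ar0|Ar0] := eqVneq (A :\ r0) set0.
  have only_r0 u : u \in A -> u = r0.
    by move=> uA; apply/eqP; move: (in_set0 u); rewrite -Ar0 !inE uA andbT => /negbFE.
  have /set0Pn[v vA] := A0; exists v => //.
  rewrite (_ : [set u in A | E v u] = set0) ?cards0 //; apply/setP=> u; rewrite !inE.
  by apply/negbTE/negP => /andP[/only_r0 -> ]; rewrite (only_r0 v vA) Eirr.
have [b /setD1P[br0 bA] bmax] := ex_maximal le_refl le_anti le_trans Ar0.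
have bmaxA y : y \in A -> le b y -> y = b.
  move=> yA lby; apply: bmax (lby); rewrite !inE yA andbT.
  by apply: contraNneq br0 => yr0; rewrite yr0 in lby; apply/eqP; exact: le_anti lby (le_r0 b).
(* Above a vertex v != r0 of C the order is a chain containing the maximal b, so
   all the A-neighbours of v lie in C. *)
pose C := r0 |: [set x in A | le x b].
have [||||v] := @chain_low_degree C r0 b.
- apply/subsetP=> x; rewrite !inE => /predU1P[->|/andP[/inW]] //.
- by rewrite !inE bA le_refl orbT.
- by rewrite eq_sym.
- by move=> x; rewrite !inE => /predU1P[->|/andP[_ xb]]; rewrite !le_r0 ?xb.
rewrite !inE => /andP[vr0]; rewrite (negbTE vr0) /= => /andP[vA vb] degv; exists v => //.
apply: leq_trans degv; apply: subset_leq_card; apply/subsetP=> u.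
rewrite !inE => /andP[uA Evu]; rewrite uA Evu /= orbC andbT.
case/orP: (E_comparable (inW v vA) (inW u uA) Evu) => [vu|uv]; last by rewrite (le_trans uv vb).
case/orP: (le_total_above (inW v vA) (inW u uA) (inW b bA) vr0 vu vb) => [-> //|bu].
by rewrite (bmaxA u uA bu) le_refl.
Qed.

Lemma noncrossing_3colorable :
  exists f : U -> 'I_3, {in W &, forall x y, E x y -> f x != f y}.
Proof. exact: degenerate_colorable Esym Eirr noncrossing_degenerate. Qed.

End NonCrossing.

Section AcyclicPaths.
Variables (V : finType) (t : rel V).
Hypotheses (tsym : symmetric t) (tacyc : ~ has_cycle t).

Lemma diverging_paths_cycle a P Q : path t a P -> path t a Q -> a \notin P -> a \notin Q ->
  uniq P -> uniq Q -> P != [::] -> Q != [::] -> last a P = last a Q ->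
  head a P != head a Q -> has_cycle t.
Proof.
move=> pP pQ aP aQ uP uQ P0 Q0 lPQ hPQ.
have last_in (s : seq V) : s != [::] -> last a s \in s.
  by case: s => // z s _; rewrite /= mem_last.
have hasQ : has (mem Q) P by apply/hasP; exists (last a P); rewrite ?last_in //= lPQ last_in.
set i := find (mem Q) P; set w := nth a P i; set j := index w Q.
have hi : i < size P by rewrite -has_find.
have wQ : w \in Q := nth_find a hasQ.
have hj : j < size Q by rewrite index_mem.
have takeP : take i.+1 P = rcons (take i P) w by rewrite (take_nth a hi).
have takeQ : take j.+1 Q = rcons (take j Q) w by rewrite (take_nth a hj) nth_index.
exists (a :: take i.+1 P ++ rev (take j Q)); split.
- rewrite /= size_cat size_rev size_takel // size_takel; last exact: ltnW.
  rewrite ltnS addSn ltnS addn_gt0.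
  case: (posnP i) => [i0|//]; case: (posnP j) => [j0|//].
  move: hPQ; have -> : head a P = w by rewrite /w i0; case: (P) P0.
  by rewrite -(nth_index a wQ) -/j j0; case: (Q) Q0 => //= ? ?; rewrite eqxx.
- rewrite cons_uniq mem_cat mem_rev negb_or.
  rewrite (contra (fun H => mem_take H) aP) (contra (fun H => mem_take H) aQ) /=.
  rewrite cat_uniq rev_uniq !take_uniq //= andbT; apply/hasPn=> y; rewrite mem_rev => yQ'.
  have yQ : y \in Q := mem_take yQ'.
  apply/negP=> yP'; have yP : y \in P := mem_take yP'.
  move: yP'; rewrite (in_take _ yP) ltnS leq_eqVlt => /orP[/eqP iy|iy].
    have ew : y = w by rewrite /w -iy nth_index.
    by move: yQ'; rewrite ew (in_take _ wQ) ltnn.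
  by move: (before_find a iy); rewrite nth_index //= yQ.
- rewrite /= rcons_cat cat_path take_path //= takeP last_rcons -rev_cons.
  have := rev_path t a (take j.+1 Q); rewrite takeQ last_rcons belast_rcons => ->.
  rewrite (eq_path (e' := t)); first by rewrite -takeQ take_path.
  by move=> x y /=; rewrite tsym.
Qed.

Lemma path_tail_unique p q a : path t a p -> path t a q -> uniq (a :: p) -> uniq (a :: q) ->
  last a p = last a q -> p = q.
Proof.
elim: p a q => [|b p IH] a [|b' q] //=.
- by move=> _ _ _ /andP[aq _] e; move: aq; rewrite e mem_last.
- by move=> _ _ /andP[ap _] _ e; move: ap; rewrite -e mem_last.
move=> /andP[ab pp] /andP[ab' pq] /andP[ap up] /andP[aq uq] e.
have [eb|nbb] := eqVneq b b'; first by subst b'; rewrite (IH b q pp pq up uq e).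
by case: tacyc; apply: (@diverging_paths_cycle a (b :: p) (b' :: q)); rewrite //= ?ab ?ab'.
Qed.

Lemma gpath_unique a x p q : gpath t a x p -> gpath t a x q -> p = q.
Proof.
case: p => [|z p] [] // _ /= hz lp up sp; case: q => [|z' q] [] // _ /= hz' lq uq sq.
subst z z'; congr (_ :: _); apply: (path_tail_unique sp sq up uq).
by rewrite lp lq.
Qed.

End AcyclicPaths.

Section TreeOrder.
Variables (V : finType) (t : rel V) (r : V).
Hypotheses (tsym : symmetric t) (tirr : irreflexive t) (tacyc : ~ has_cycle t).
Hypothesis tconn : forall a b : V, exists p, gpath t a b p.

Definition gpathb a b (p : seq V) : bool :=
  [&& p != [::], head a p == a, last a p == b, uniq p & sorted t p].

Lemma gpathP a b p : reflect (gpath t a b p) (gpathb a b p).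
Proof.
apply: (iffP and5P) => [[/eqP ? /eqP ? /eqP ? ? ?] | [/eqP ? -> -> ? ?]]; first by split.
by split; rewrite ?eqxx.
Qed.

Lemma ex_root_path x : exists p, gpathb r x p.
Proof. by have [p /gpathP] := tconn r x; exists p. Qed.

Definition root_path x : seq V := xchoose (ex_root_path x).

Definition tle y x : bool := y \in root_path x.

Lemma root_pathP x : gpath t r x (root_path x).
Proof. exact/gpathP/(xchooseP (ex_root_path x)). Qed.

Lemma root_path_gpath x p : gpath t r x p -> p = root_path x.
Proof. by move=> /gpath_unique; apply; [exact: tsym | exact: tacyc | exact: root_pathP]. Qed.

Lemma tleP y x : tree_le t r y x <-> tle y x.
Proof.
split; first by case=> p [/root_path_gpath ->].
by move=> yx; exists (root_path x); split => //; exact: root_pathP.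
Qed.

Lemma tle_refl : reflexive tle.
Proof.
move=> x; rewrite /tle; have [+ _ + _ _] := root_pathP x.
by case: (root_path x) => // z p _ /= <-; exact: mem_last.
Qed.

Lemma tle_root x : tle r x.
Proof.
rewrite /tle; have [+ + _ _ _] := root_pathP x.
by case: (root_path x) => // z p _ /= ->; exact: mem_head.
Qed.

Lemma root_path_prefix y x : tle y x ->
  root_path y = take (index y (root_path x)).+1 (root_path x).
Proof.
move=> yx; apply/esym/root_path_gpath.
have [P0 hP _ uP sP] := root_pathP x; move: yx P0 hP uP sP; rewrite /tle.
case: (root_path x) => // z p yP _ hz up sp; split => //.
- by rewrite (take_nth r) ?index_mem // last_rcons nth_index.
- exact: take_uniq.
- exact: take_sorted.
Qed.

Lemma tle_index w y x : tle y w -> tle x w ->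
  tle y x = (index y (root_path w) <= index x (root_path w)).
Proof. by move=> yw xw; rewrite {1}/tle (root_path_prefix xw) (in_take _ yw) ltnS. Qed.

Lemma tle_trans : transitive tle.
Proof. by move=> y x z xy yz; move: xy; rewrite /tle (root_path_prefix yz) => /mem_take. Qed.

Lemma root_path_inj : injective root_path.
Proof.
move=> x y e; have [_ _ lx _ _] := root_pathP x; have [_ _ ly _ _] := root_pathP y.
by rewrite -lx e ly.
Qed.

Lemma tle_anti x y : tle x y -> tle y x -> x = y.
Proof.
move=> xy yx; apply: root_path_inj.
have size_le u v : tle u v -> size (root_path u) <= size (root_path v).
  by move=> uv; rewrite (root_path_prefix uv) size_take_min geq_minr.
rewrite (root_path_prefix xy) take_oversize //; apply: leq_trans (size_le _ _ yx) _.
by rewrite (root_path_prefix xy) size_take_min geq_minl.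
Qed.

Lemma tle_total_below x y z : tle x z -> tle y z -> tle x y || tle y x.
Proof. by move=> xz yz; rewrite (tle_index xz yz) (tle_index yz xz) leq_total. Qed.

Lemma lt_index w y x : tle y w -> tle x w -> tle y x -> y != x ->
  index y (root_path w) < index x (root_path w).
Proof.
move=> yw xw yx nyx; move: yx; rewrite (tle_index yw xw) leq_eqVlt => /orP[/eqP e|//].
by move: nyx; rewrite -(nth_index r yw) e nth_index // eqxx.
Qed.

Lemma root_path_rcons p x : t p x -> x \notin root_path p ->
  root_path x = rcons (root_path p) x.
Proof.
move=> tpx xP; apply/esym/root_path_gpath.
have [P0 hP lP uP sP] := root_pathP p; split.
- by case: (root_path p).
- by case: (root_path p) P0 hP => // z s _ hz; exact: hz.
- by rewrite last_rcons.
- by rewrite rcons_uniq xP.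
- by move: P0 lP sP; case: (root_path p) => // z s _ /= lP sP; rewrite rcons_path sP lP.
Qed.

Lemma tle_adj x y : t x y -> tle x y || tle y x.
Proof.
move=> txy; case yx: (tle y x); rewrite ?orbT //.
have xx := tle_refl x; rewrite /tle in xx *.
by rewrite (root_path_rcons txy (negbT yx)) mem_rcons in_cons xx orbT.
Qed.

Lemma tle_parent_unique p p' x : t p x -> t p' x -> tle p x -> tle p' x ->
  p != x -> p' != x -> p = p'.
Proof.
have rcons_parent q : t q x -> tle q x -> q != x -> root_path x = rcons (root_path q) x.
  move=> tqx qx nqx; apply: root_path_rcons => //.
  by apply: contra nqx => xq; apply/eqP; apply: tle_anti.
move=> tpx tp'x px p'x npx np'x; apply: root_path_inj; apply: (@rcons_injl _ x).
by rewrite -!rcons_parent.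
Qed.

Lemma tle_child m y : tle m y -> m != y -> exists s, [/\ t m s, tle m s, s != m & tle s y].
Proof.
move=> my nmy; set P := root_path y; set i := index m P.
have [_ _ _ uP sP] := root_pathP y.
have hi : i.+1 < size P.
  apply: leq_ltn_trans (lt_index my (tle_refl y) my nmy) _.
  by rewrite index_mem; exact: tle_refl.
have mP : m \in P := my.
exists (nth r P i.+1); split.
- by rewrite -(nth_index r mP); apply: (sortedP r sP).
- by rewrite (tle_index my (mem_nth r hi)) index_uniq // leqnSn.
- by rewrite -(nth_index r mP) nth_uniq ?index_mem // -/i; lia.
- exact: mem_nth.
Qed.

Lemma tle_parent m : m != r -> exists p, [/\ t p m, tle p m & p != m].
Proof.
move=> nmr; set P := root_path m; set j := index m P.
have [P0 hP _ uP sP] := root_pathP m.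
have rP : index r P = 0.
  by move: P0 hP; rewrite /P; case: (root_path m) => //= z s _ ->; rewrite eqxx.
have j0 : 0 < j by rewrite -rP (lt_index (tle_root m) (tle_refl m) (tle_root m)) // eq_sym.
have hj : j < size P by rewrite index_mem; exact: tle_refl.
have mP : m \in P := tle_refl m.
exists (nth r P j.-1); split.
- rewrite -[X in t _ X](nth_index r mP) -/j.
  by have /(sortedP r)/(_ j.-1) := sP; rewrite prednK //; apply.
- by apply: mem_nth; apply: leq_ltn_trans hj; exact: leq_pred.
- by rewrite -[X in _ != X](nth_index r mP) nth_uniq ?(leq_ltn_trans (leq_pred j)) // -/j; lia.
Qed.

Lemma exists_above x : 1 < tdeg t x -> exists2 d, tle x d & d != x.
Proof.
move=> deg; case: (boolP [exists d, tle x d && (d != x)]) => [/existsP[d /andP[]]|none].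
  by exists d.
suff : tdeg t x <= 1 by rewrite leqNgt deg.
have below y : t x y -> tle y x /\ y != x.
  move=> txy; have nyx : y != x by apply: contraTneq txy => ->; rewrite tirr.
  split=> //; case/orP: (tle_adj txy) => // xy.
  by case/negP: none; apply/existsP; exists y; rewrite xy nyx.
apply/card_le1_eqP => p p'; rewrite !inE => txp txp'.
have [px npx] := below p txp; have [p'x np'x] := below p' txp'.
by apply: (tle_parent_unique (x := x)); rewrite 1?tsym.
Qed.

Lemma no_secant_noncrossing (g : rel V) : no_secant_edges g t r ->
  forall x y z w, tle x y -> x != y -> tle y z -> y != z -> tle z w -> z != w ->
  g x z -> g y w -> False.
Proof.
move=> nosec x y z w xy nxy yz nyz zw nzw gxz gyw.
have yw := tle_trans yz zw; have xw := tle_trans xy yw.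
have ix := lt_index xw yw xy nxy; have iy := lt_index yw zw yz nyz.
have iz := lt_index zw (tle_refl w) zw nzw.
have iw : index w (root_path w) < size (root_path w) by rewrite index_mem; exact: tle_refl.
apply: (nosec x z y w); exists (root_path w), (index x (root_path w)), (index z (root_path w)),
  (index y (root_path w)), (index w (root_path w)).
have ww : tle w w := tle_refl w.
split; rewrite ?(nth_index r xw, nth_index r yw, nth_index r zw, nth_index r ww) ?ix ?iy ?iz //.
- by have [_ _ -> _ _] := root_pathP w; exact: root_pathP.
- split; rewrite ?(ltn_trans ix iy) ?(ltn_trans iy iz) ?(ltn_trans iz iw) ?iw //.
    exact: leq_ltn_trans ix iy.
  exact: leq_ltn_trans iy iz.
Qed.

Section UniqueBranching.
Variable c : V.
Hypothesis c_unique : forall y, 2 < tdeg t y <-> y = c.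

Lemma three_neighbors_center m p s1 s2 : t m p -> t m s1 -> t m s2 ->
  p != s1 -> p != s2 -> s1 != s2 -> m = c.
Proof.
move=> tp ts1 ts2 n1 n2 n3; apply/c_unique; rewrite /tdeg cardE.
apply: (@uniq_leq_size _ [:: p; s1; s2]); first by rewrite /= !inE negb_or n1 n2 n3.
by move=> u; rewrite !inE mem_enum inE => /or3P[] /eqP ->.
Qed.

Lemma branch_center a y z : a != r -> tle a y -> tle a z -> ~~ tle y z -> ~~ tle z y ->
  [&& tle a c, tle c y & tle c z].
Proof.
move=> anr ay az nyz nzy.
set B := [set u | tle u y && tle u z].
have [m] : exists2 m, m \in B & forall u, u \in B -> tle m u -> u = m.
  by apply: ex_maximal tle_refl tle_anti tle_trans _; apply/set0Pn; exists a; rewrite inE ay.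
rewrite inE => /andP[my mz] mmax.
have am : tle a m.
  case/orP: (tle_total_below ay my) => // ma.
  by rewrite (mmax a _ ma) ?inE ?ay //; exact: tle_refl.
have nmr : m != r.
  by apply: contra anr => /eqP mr; rewrite mr in am; apply/eqP; apply: tle_anti am (tle_root a).
have nmy : m != y by apply: contraNneq nyz => <-.
have nmz : m != z by apply: contraNneq nzy => <-.
have [sy [tmsy msy nsym syy]] := tle_child my nmy.
have [sz [tmsz msz nszm szz]] := tle_child mz nmz.
have [p [tpm pm npm]] := tle_parent nmr.
have below_m s : tle m s -> s != m -> p != s.
  move=> ms nsm; apply: contra npm => /eqP ps; rewrite ps in pm *.
  by apply/eqP; apply: tle_anti.
have nsyz : sy != sz.
  apply: contra nsym => /eqP syz; apply/eqP/mmax => //.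
  by rewrite inE syy syz szz.
have mc : m = c.
  apply: (three_neighbors_center (p := p) (s1 := sy) (s2 := sz)) => //; first by rewrite tsym.
  - exact: below_m.
  - exact: below_m.
by rewrite -mc am my mz.
Qed.

End UniqueBranching.
End TreeOrder.

Lemma colorable_nat (V : finType) (g : rel V) (k : nat) (f : V -> nat) :
  (forall x, f x < k) -> (forall x y, g x y -> f x != f y) -> colorable g k.
Proof. by move=> fk fg; exists (fun x => Ordinal (fk x)). Qed.

Lemma tperm_max_lt (i j : 'I_3) : i != j -> tperm j ord_max i < 2.
Proof.
move=> nij; have : tperm j ord_max i != tperm j ord_max j by rewrite (inj_eq perm_inj).
by rewrite tpermL -val_eqE /=; have := ltn_ord (tperm j ord_max i); lia.
Qed.

Section Cone.
Variables (V : finType) (g : rel V).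
Hypothesis gsym : symmetric g.

Definition boundary (X : {set V}) : {set V} := [set x in X | [exists y, (y \notin X) && g x y]].

Definition cone (X : {set V}) (a : V) : rel V := fun x y =>
  [|| [&& x \in X, y \in X & g x y], (x == a) && (y \in boundary X)
    | (y == a) && (x \in boundary X)].

Lemma cone_sym (X : {set V}) a : symmetric (cone X a).
Proof. by move=> x y; rewrite /cone gsym andbCA orbA orbAC -orbA. Qed.

Lemma cone_irr (X : {set V}) a : irreflexive g -> a \notin X -> irreflexive (cone X a).
Proof.
move=> girr aX x; rewrite /cone girr !andbF /= orbb.
by apply/negbTE/negP => /andP[/eqP -> /setIdP[aX' _]]; rewrite aX' in aX.
Qed.

Lemma colorable_glue (X : {set V}) (a b : V) (k1 k2 : V -> 'I_3) :
  {in a |: X &, forall x y, cone X a x y -> k1 x != k1 y} ->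
  {in b |: ~: X &, forall x y, cone (~: X) b x y -> k2 x != k2 y} ->
  colorable g 4.
Proof.
move=> k1P k2P.
(* The colour of a is sent to 2 and that of b to 3 - 2 = 1, so an edge between X
   and its complement joins a colour in {0,1} to one in {2,3}. *)
pose col x : nat := if x \in X then nat_of_ord (tperm (k1 a) ord_max (k1 x))
                    else 3 - tperm (k2 b) ord_max (k2 x).
apply: (@colorable_nat _ _ _ col) => [x|].
  by rewrite /col; case: ifP => _; [apply: leq_trans (ltn_ord _) _ | rewrite ltnS leq_subr].
have cross x y : x \in X -> y \notin X -> g x y -> col x != col y.
  move=> xX yX gxy; rewrite /col xX (negbTE yX).
  have xB : x \in boundary X by rewrite inE xX; apply/existsP; exists y; rewrite yX.
  have yB : y \in boundary (~: X).
    by rewrite inE inE yX; apply/existsP; exists x; rewrite inE negbK xX gsym.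
  have /tperm_max_lt : k1 x != k1 a.
    by apply: k1P; rewrite ?inE ?eqxx ?xX ?orbT // /cone eqxx xB !orbT.
  have /tperm_max_lt : k2 y != k2 b.
    by apply: k2P; rewrite ?inE ?eqxx ?yX ?orbT // /cone eqxx yB !orbT.
  lia.
move=> x y gxy; have [xX|xX] := boolP (x \in X); have [yX|yX] := boolP (y \in X).
- rewrite /col xX yX val_eqE (inj_eq perm_inj); apply: k1P; rewrite ?inE ?xX ?yX ?orbT //.
  by rewrite /cone xX yX gxy.
- exact: cross.
- by rewrite eq_sym; apply: cross; rewrite // gsym.
- rewrite /col (negbTE xX) (negbTE yX).
  have : tperm (k2 b) ord_max (k2 x) != tperm (k2 b) ord_max (k2 y).
    rewrite (inj_eq perm_inj); apply: k2P; rewrite ?inE ?xX ?yX ?orbT //.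
    by rewrite /cone !inE xX yX gxy.
  rewrite -val_eqE /=.
  have := ltn_ord (tperm (k2 b) ord_max (k2 x)); have := ltn_ord (tperm (k2 b) ord_max (k2 y)).
  lia.
Qed.

End Cone.

Section StarLikeTree.
Variables (V : finType) (g t : rel V) (r c : V).
Hypotheses (gsym : symmetric g) (girr : irreflexive g).
Hypotheses (tsym : symmetric t) (tacyc : ~ has_cycle t).
Hypothesis tconn : forall a b : V, exists p, gpath t a b p.
Hypothesis normal : normal_tree g t r.
Hypothesis nosec : no_secant_edges g t r.
Hypothesis c_unique : forall y, 2 < tdeg t y <-> y = c.

Local Notation le := (tle r tconn).
Local Notation lt x y := (le x y && (x != y)).
Let trunk := [set v | le v c].

Let le_refl : reflexive le := tle_refl r tconn.
Let le_anti : forall x y, le x y -> le y x -> x = y := @tle_anti _ _ r tsym tacyc tconn.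
Let le_trans : transitive le := @tle_trans _ _ r tsym tacyc tconn.
Let le_total_below : forall x y z, le x z -> le y z -> le x y || le y x :=
  @tle_total_below _ _ r tsym tacyc tconn.
Let le_root : forall x, le r x := tle_root r tconn.

Lemma g_comparable x y : g x y -> le x y || le y x.
Proof. by case/normal => /(tleP r tsym tacyc tconn) H; rewrite H ?orbT. Qed.

Lemma g_noncrossing x y z w : lt x y -> lt y z -> lt z w -> g x z -> g y w -> False.
Proof.
by move=> /andP[? ?] /andP[? ?] /andP[? ?]; apply: (no_secant_noncrossing tsym tacyc nosec).
Qed.

Lemma trunk_le a b : a \in trunk -> b \notin trunk -> le a b || le b a -> le a b.
Proof. by rewrite !inE => ac bc /orP[] // ba; rewrite (le_trans ba ac) in bc. Qed.

Lemma boundary_above_center x b : x \in trunk -> x != r -> b \notin trunk -> g x b -> le c b.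
Proof.
move=> xS xr bS gxb; have xb := trunk_le xS bS (g_comparable gxb).
case: (boolP (le c b)) => // ncb; move: (xS) (bS); rewrite !inE => xc bc.
by have /and3P[_ _ cb] := branch_center tsym tacyc c_unique xr xc xb ncb bc; case/negP: ncb.
Qed.

Lemma lt_neq_root x y : lt x y -> y != r.
Proof.
case/andP=> xy; apply: contraNneq => yr.
by rewrite yr in xy *; rewrite (le_anti xy (le_root x)).
Qed.

Lemma trunk_cone_3colorable d : le c d -> d != c ->
  exists k : V -> 'I_3, {in d |: trunk &, forall x y, cone g trunk d x y -> k x != k y}.
Proof.
move=> cd dc.
have dS : d \notin trunk by rewrite inE; apply: contra dc => dc'; apply/eqP/le_anti.
have le_d v : v \in d |: trunk -> le v d.
  by case/setU1P => [->|]; [exact: le_refl | rewrite inE => /le_trans; apply].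
have in_trunk v v' : v \in d |: trunk -> v' \in d |: trunk -> lt v v' -> v \in trunk.
  move=> /setU1P[->|//] /setU1P[->|v'S]; first by rewrite eqxx andbF.
  by case/andP=> dv' _; move: v'S; rewrite !inE; exact: le_trans dv'.
have neq_d v : v \in trunk -> v != d by move=> vS; apply: contraNneq dS => <-.
apply: (noncrossing_3colorable (le := le) (r0 := r)) => //.
- by rewrite !inE le_root orbT.
- by move=> x y z _ /le_d yd /le_d zd _ _ _; apply: le_total_below yd zd.
- exact: cone_sym.
- exact: cone_irr.
- move=> x y xW yW.
  case/or3P => [/and3P[_ _ /g_comparable] // | /andP[/eqP -> _] | /andP[/eqP -> _]].
    by rewrite (le_d y yW) orbT.
  by rewrite (le_d x xW).
move=> x y z w xW yW zW wW xy yz zw Exz Eyw.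
have xS := in_trunk _ _ xW yW xy; have yS := in_trunk _ _ yW zW yz.
have zS := in_trunk _ _ zW wW zw.
have gxz : g x z.
  by case/or3P: Exz => [/and3P[] // | /andP[/eqP xd] | /andP[/eqP zd]];
    [move: (neq_d x xS) | move: (neq_d z zS)]; rewrite ?xd ?zd eqxx.
case/or3P: Eyw => [/and3P[_ _ gyw] | /andP[/eqP yd _] | /andP[_ yB]].
- exact: g_noncrossing xy yz zw gxz gyw.
- by move: (neq_d y yS); rewrite yd eqxx.
(* The apex d stands for an off-trunk neighbour b of y, which lies above c. *)
case/setIdP: yB => _ /existsP[b /andP[bS gyb]].
have cb := boundary_above_center yS (lt_neq_root xy) bS gyb.
apply: (g_noncrossing xy yz _ gxz gyb); rewrite (le_trans _ cb) //.
  by apply: contraNneq bS => <-.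
by move: zS; rewrite inE.
Qed.

Lemma offtrunk_cone_3colorable :
  exists k : V -> 'I_3, {in r |: ~: trunk &, forall x y, cone g (~: trunk) r x y -> k x != k y}.
Proof.
have rS : r \in trunk by rewrite inE le_root.
have off_trunk v v' : v' \in r |: ~: trunk -> lt v v' -> v' \notin trunk.
  by move=> /setU1P[->|]; [move/lt_neq_root; rewrite eqxx | rewrite inE].
have neq_r v : v \notin trunk -> v != r by move=> vS; apply: contraNneq vS => ->.
apply: (noncrossing_3colorable (le := le) (r0 := r)) => //.
- exact: setU11.
- move=> x y z xW _ _ xr xy xz.
  have xS : x \notin trunk by case/setU1P: xW xr => [->|]; rewrite ?eqxx ?inE.
  case: (boolP (le y z)) => // nyz; case: (boolP (le z y)) => // nzy.
  have /and3P[xc _ _] := branch_center tsym tacyc c_unique xr xy xz nyz nzy.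
  by move: xS; rewrite inE xc.
- exact: cone_sym.
- by apply: cone_irr; rewrite ?inE ?negbK.
- move=> x y _ _.
  by case/or3P => [/and3P[_ _ /g_comparable] // | /andP[/eqP -> _] | /andP[/eqP -> _]];
    rewrite le_root ?orbT.
move=> x y z w _ yW zW wW xy yz zw Exz Eyw.
have yS := off_trunk _ _ yW xy; have zS := off_trunk _ _ zW yz.
have wS := off_trunk _ _ wW zw.
have gyw : g y w.
  by case/or3P: Eyw => [/and3P[] // | /andP[/eqP yr] | /andP[/eqP wr]];
    [move: (neq_r y yS) | move: (neq_r w wS)]; rewrite ?yr ?wr eqxx.
case/or3P: Exz => [/and3P[_ _ gxz] | /andP[_ zB] | /andP[/eqP zr _]].
- exact: g_noncrossing xy yz zw gxz gyw.
- case/setIdP: zB => _ /existsP[a /andP[]]; rewrite inE negbK => aS gza.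
  have gaz : g a z by rewrite gsym.
  have az := trunk_le aS zS (g_comparable gaz).
  have ay : le a y.
    case/orP: (le_total_below az (elimT andP yz).1) => // ya.
    by move: yS; rewrite inE (le_trans ya _) //; move: aS; rewrite inE.
  apply: (g_noncrossing _ yz zw gaz gyw).
  by rewrite ay; apply: contraNneq yS => <-.
- by move: (neq_r z zS); rewrite zr eqxx.
Qed.

End StarLikeTree.

Theorem proposition5 (V : finType) (g t : rel V) (r : V) :
  simple_graph g ->
  spanning_tree g t ->
  normal_tree g t r ->
  no_secant_edges g t r ->
  star0_like t ->
  colorable g 4.
Proof.
(* Only the tree order of t matters: its edges need not be edges of g. *)
move=> [gsym girr] [[[tsym tirr] tconn tacyc] _] normal nosec [c c_unique].
have [d cd dc] : exists2 d, tle r tconn c d & d != c.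
  by apply: (exists_above r tsym tirr tacyc tconn); apply: ltnW; apply/c_unique.
have [k1 k1P] := trunk_cone_3colorable gsym girr tsym tacyc normal nosec c_unique cd dc.
have [k2 k2P] := offtrunk_cone_3colorable gsym girr tsym tacyc tconn normal nosec c_unique.
exact: (colorable_glue gsym k1P k2P).
Qed.
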